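(* Fix a real number $d$ with $0<d<1$ and let $c(x)=x^d$. For scheduling cost-sharing games with $n$ jobs and cost function $c$, the worst-case price of anarchy is $\Theta\!\left(n^{(1-d)/2}\right)$.
   Context: A game is specified by a cost function $c:\mathbb{Z}_{\ge 0}\to\mathbb{R}_{\ge0}$ (here $c(x)=x^d$, so $c(0)=0$), a time horizon $T$ with time slots $t=1,\dots,T$, and a set $J$ of $n$ jobs, each job $j$ having integer release time $r_j$ and integer deadline $d_j$ with $0<r_j<d_j<T$. An assignment $s$ gives each job $j$ a slot $s_j$ with $r_j\le s_j<d_j$ (the allowed interval $[r_j,d_j)$ of job $j$). The load of slot $t$ is $l_t(s)=|\{j: s_j=t\}|$ and the total cost is $C(s)=\sum_{t=1}^T c(l_t(s))$. Each job on slot $t$ pays the cost share $c(l_t(s))/l_t(s)$. An assignment $s$ is a Nash equilibrium (NE) if for every job $j$ and every slot $t\ne s_j$ with $t\in[r_j,d_j)$: $\frac{c(l_{s_j}(s))}{l_{s_j}(s)}\le \frac{c(l_t(s)+1)}{l_t(s)+1}$. The price of anarchy of a game is $\max_{s \text{ a NE}} C(s)/\min_{s^*} C(s^* )$, the minimum over all assignments; the worst-case price of anarchy for $n$ jobs is the supremum of this over all games with $n$ jobs. *)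

From Stdlib Require Import Reals Lra Lia List Arith.
Import ListNotations.
Open Scope R_scope.

Definition cost (d : R) (x : nat) : R :=
  if Nat.eqb x 0 then 0 else Rpower (INR x) d.

Definition share (d : R) (k : nat) : R := cost d k / INR k.

Record game := Game { horizon : nat; release : nat -> nat; deadline : nat -> nat }.

Definition valid_game (n : nat) (g : game) : Prop :=
  forall j, (j < n)%nat ->
    (0 < release g j)%nat /\ (release g j < deadline g j)%nat /\
    (deadline g j < horizon g)%nat.

Definition feasible (n : nat) (g : game) (s : nat -> nat) : Prop :=
  forall j, (j < n)%nat -> (release g j <= s j < deadline g j)%nat.

Definition load (n : nat) (s : nat -> nat) (t : nat) : nat :=
  length (filter (fun j => Nat.eqb (s j) t) (seq 0 n)).

Definition total_cost (d : R) (n : nat) (g : game) (s : nat -> nat) : R :=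
  fold_right Rplus 0 (map (fun t => cost d (load n s t)) (seq 1 (horizon g))).

Definition is_NE (d : R) (n : nat) (g : game) (s : nat -> nat) : Prop :=
  feasible n g s /\
  forall j t, (j < n)%nat -> t <> s j ->
    (release g j <= t < deadline g j)%nat ->
    share d (load n s (s j)) <= share d (load n s t + 1).

From Stdlib Require Import Reals Lra Lia List Arith.
Import ListNotations.
Open Scope R_scope.

(* A job pays l^(d-1) on a slot of load l, so the cost of an equilibrium s is the
   sum of these shares.  Group the jobs by their slot u in another assignment.
   Stability of s forces a job whose s-slot lies strictly between u and the s-slot
   of another job of the group to have a strictly smaller load, since that other job
   could move there.  Hence at most 3b^2 jobs of a group have load at most b, and
   the shares of a group of m jobs add up to at most 6 m^((1+d)/2), which is at most
   6 n^((1-d)/2) m^d.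

   Conversely, in the staircase game slots 1, ..., k ~ sqrt(2n) carry loads
   1, 2, ..., k (the last one also absorbing the leftover jobs) and each job may use
   every earlier slot.  This is an equilibrium of cost about n k^(d-1), while putting
   all jobs in slot 1 costs n^d. *)

Lemma exp_ge_tangent s x : exp s * (1 + (x - s)) <= exp x.
Proof.
  replace (exp x) with (exp s * exp (x - s)) by (rewrite <- exp_plus; f_equal; ring).
  apply Rmult_le_compat_l; [left; apply exp_pos | apply exp_ineq1_le].
Qed.

Lemma exp_mul_le_chord a t : 0 <= a <= 1 -> exp (a * t) <= 1 + a * (exp t - 1).
Proof.
  intros Ha.
  pose proof (exp_ge_tangent (a * t) t) as Ht.
  pose proof (exp_ge_tangent (a * t) 0) as H0; rewrite exp_0 in H0.
  nra.
Qed.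

Lemma Rpower_le_bernoulli z a : 0 < z -> 0 <= a <= 1 -> Rpower z a <= 1 + a * (z - 1).
Proof.
  intros Hz Ha. unfold Rpower.
  rewrite <- (exp_ln z) at 2 by exact Hz.
  now apply exp_mul_le_chord.
Qed.

Lemma Rpower_pos x a : 0 < Rpower x a.
Proof. apply exp_pos. Qed.

Lemma Rpower_le_scaled y z c e :
  0 <= e <= 1 -> 1 <= c -> 0 < y -> 0 < z -> y <= c * z -> Rpower y e <= c * Rpower z e.
Proof.
  intros He Hc Hy Hz Hyz.
  apply Rle_trans with (Rpower (c * z) e); [apply Rle_Rpower_l; lra|].
  rewrite <- Rpower_mult_distr by lra.
  apply Rmult_le_compat_r; [left; apply Rpower_pos|].
  rewrite <- (Rpower_1 c) at 2 by lra.
  now apply Rle_Rpower.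
Qed.

Lemma Rpower_sq x e : 0 < x -> Rpower (x * x) e = Rpower x (2 * e).
Proof.
  intros Hx. rewrite <- Rpower_mult_distr, <- Rpower_plus by exact Hx. f_equal; ring.
Qed.

Lemma cost_S a m : cost a (S m) = Rpower (INR (S m)) a.
Proof. reflexivity. Qed.

Lemma share_eq d k : (1 <= k)%nat -> share d k = / Rpower (INR k) (1 - d).
Proof.
  intros Hk. destruct k as [|k]; [lia|].
  unfold share. rewrite cost_S.
  pose proof (lt_0_INR (S k) ltac:(lia)) as Hpos.
  replace d with (1 + - (1 - d)) at 1 by ring.
  rewrite Rpower_plus, Rpower_Ropp, Rpower_1 by exact Hpos.
  field. split; [apply Rgt_not_eq, Rpower_pos | lra].
Qed.

Lemma cost_increment_ge a m : 0 < a < 1 -> (1 <= m)%nat ->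
  a / Rpower (INR m) (1 - a) <= cost a m - cost a (m - 1).
Proof.
  intros Ha Hm. destruct m as [|m]; [lia|].
  rewrite cost_S. replace (S m - 1)%nat with m by lia.
  destruct m as [|m].
  - simpl INR. unfold Rpower. rewrite ln_1, !Rmult_0_r, exp_0. unfold cost; simpl. lra.
  - rewrite cost_S.
    set (x := INR (S (S m))).
    assert (Hx : 1 < x) by (apply lt_1_INR; lia).
    assert (Hx1 : INR (S m) = x - 1) by (unfold x; rewrite (S_INR (S m)); ring).
    rewrite Hx1.
    assert (Hsplit : Rpower x a = x * / Rpower x (1 - a)).
    { replace a with (1 + - (1 - a)) at 1 by ring.
      rewrite Rpower_plus, Rpower_Ropp, Rpower_1 by lra. reflexivity. }
    assert (Hb : Rpower (x - 1) a <= Rpower x a * (1 - a / x)).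
    { replace (x - 1) with (x * ((x - 1) / x)) by (field; lra).
      rewrite <- Rpower_mult_distr by (try apply Rdiv_lt_0_compat; lra).
      apply Rmult_le_compat_l; [left; apply Rpower_pos|].
      apply Rle_trans with (1 + a * ((x - 1) / x - 1)).
      - apply Rpower_le_bernoulli; [apply Rdiv_lt_0_compat|]; lra.
      - right. field. lra. }
    replace (a / Rpower x (1 - a)) with (Rpower x a * (a / x)).
    + lra.
    + rewrite Hsplit. field. split; [apply Rgt_not_eq, Rpower_pos | lra].
Qed.

Lemma share_lt d k l : d < 1 -> (1 <= k < l)%nat -> share d l < share d k.
Proof.
  intros Hd Hkl. rewrite !share_eq by lia.
  apply Rinv_lt_contravar.
  - apply Rmult_lt_0_compat; apply Rpower_pos.
  - apply Rlt_Rpower_l; [lra|]. split; [apply lt_0_INR | apply lt_INR]; lia.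
Qed.

Lemma share_le d k l : d < 1 -> (1 <= k <= l)%nat -> share d l <= share d k.
Proof.
  intros Hd Hkl. destruct (Nat.eq_dec k l) as [->|]; [lra|].
  left. apply share_lt; [lra|lia].
Qed.

Lemma le_of_share_le d k l : d < 1 -> (1 <= k)%nat -> (1 <= l)%nat ->
  share d k <= share d l -> (l <= k)%nat.
Proof.
  intros Hd Hk Hl Hs. destruct (le_lt_dec l k) as [|Hkl]; [assumption|].
  pose proof (share_lt d k l Hd (conj Hk Hkl)). lra.
Qed.

Lemma INR_mul_share d k : INR k * share d k = cost d k.
Proof.
  unfold share. destruct k as [|k]; [unfold cost; simpl; ring|].
  field. apply not_0_INR. lia.
Qed.

Lemma cost_sqrt_scaling d m n : 0 < d < 1 -> (m <= n)%nat ->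
  cost ((1 + d) / 2) m <= Rpower (INR n) ((1 - d) / 2) * cost d m.
Proof.
  intros Hd Hmn. destruct m as [|m]; [unfold cost; simpl; lra|].
  rewrite !cost_S.
  replace ((1 + d) / 2) with ((1 - d) / 2 + d) by field.
  rewrite Rpower_plus.
  apply Rmult_le_compat_r; [left; apply Rpower_pos|].
  apply Rle_Rpower_l; [lra|]. split; [apply lt_0_INR | apply le_INR]; lia.
Qed.

Lemma share_le_of_sq_ge d x m : 0 < d < 1 -> (1 <= x)%nat -> (1 <= m <= 3 * x * x)%nat ->
  share d x <= 3 / Rpower (INR m) ((1 - d) / 2).
Proof.
  intros Hd Hx Hm. rewrite share_eq by lia.
  pose proof (lt_0_INR x ltac:(lia)) as Hx0.
  assert (Hsq : Rpower (INR m) ((1 - d) / 2) <= 3 * Rpower (INR x) (1 - d)).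
  { replace (1 - d) with (2 * ((1 - d) / 2)) at 2 by field.
    rewrite <- Rpower_sq by exact Hx0.
    apply Rpower_le_scaled; try lra.
    - apply lt_0_INR; lia.
    - nra.
    - pose proof (le_INR _ _ (proj2 Hm)) as Hm'. rewrite !mult_INR in Hm'. simpl in Hm'. lra. }
  unfold Rdiv. rewrite <- (Rinv_inv 3) at 1. rewrite <- Rinv_mult.
  apply Rinv_le_contravar; [|lra].
  pose proof (Rpower_pos (INR m) ((1 - d) / 2)). lra.
Qed.

Notation sumR l := (fold_right Rplus 0 l).

Lemma sumR_app l1 l2 : sumR (l1 ++ l2) = sumR l1 + sumR l2.
Proof. induction l1 as [|x l1 IH]; simpl; [ring|]. rewrite IH; ring. Qed.

Lemma sumR_le {A} (f g : A -> R) l :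
  (forall x, In x l -> f x <= g x) -> sumR (map f l) <= sumR (map g l).
Proof.
  induction l as [|x l IH]; intros H; simpl; [lra|].
  pose proof (H x (or_introl eq_refl)). pose proof (IH (fun y Hy => H y (or_intror Hy))). lra.
Qed.

Lemma sumR_plus {A} (f g : A -> R) l :
  sumR (map (fun x => f x + g x) l) = sumR (map f l) + sumR (map g l).
Proof. induction l as [|x l IH]; simpl; [ring|]. rewrite IH; ring. Qed.

Lemma sumR_scal {A} c (f : A -> R) l :
  sumR (map (fun x => c * f x) l) = c * sumR (map f l).
Proof. induction l as [|x l IH]; simpl; [ring|]. rewrite IH; ring. Qed.

Lemma sumR_const {A} c (l : list A) : sumR (map (fun _ => c) l) = INR (length l) * c.
Proof.
  induction l as [|x l IH]; [simpl; ring|].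
  cbn [map fold_right length]. rewrite IH, S_INR. ring.
Qed.

Lemma sumR_indicator v c U : NoDup U -> In v U ->
  sumR (map (fun u => if Nat.eqb v u then c else 0) U) = c.
Proof.
  induction U as [|u U IH]; intros HU Hv; [destruct Hv|].
  inversion HU as [|? ? Hu HU']; subst. simpl.
  destruct (Nat.eqb_spec v u) as [->|Hvu].
  - rewrite (map_ext_in _ (fun _ => 0)), sumR_const; [ring|].
    intros w Hw. destruct (Nat.eqb_spec u w) as [->|]; [contradiction|reflexivity].
  - destruct Hv as [->|Hv]; [contradiction|]. rewrite IH by assumption. ring.
Qed.

Lemma sumR_fibers (o : nat -> nat) (g : nat -> R) J U :
  NoDup U -> (forall j, In j J -> In (o j) U) ->
  sumR (map g J) = sumR (map (fun u => sumR (map g (filter (fun j => Nat.eqb (o j) u) J))) U).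
Proof.
  intros HU. induction J as [|j J IH]; intros HJ.
  - simpl. rewrite sumR_const. ring.
  - rewrite (map_ext_in _ (fun u => (if Nat.eqb (o j) u then g j else 0) +
                                     sumR (map g (filter (fun i => Nat.eqb (o i) u) J))) U).
    + rewrite sumR_plus, sumR_indicator, <- IH; auto with datatypes.
    + intros u _. simpl. destruct (Nat.eqb (o j) u); simpl; ring.
Qed.

Lemma length_filter_le_impl {A} (p q : A -> bool) l :
  (forall x, In x l -> p x = true -> q x = true) ->
  (length (filter p l) <= length (filter q l))%nat.
Proof.
  induction l as [|x l IH]; intros H; simpl; [lia|].
  specialize (IH (fun y Hy => H y (or_intror Hy))).
  destruct (p x) eqn:Ep; [rewrite (H x (or_introl eq_refl) Ep); simpl; lia|].
  destruct (q x); simpl; lia.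
Qed.

Lemma length_filter_orb {A} (p q : A -> bool) l :
  (length (filter (fun x => orb (p x) (q x)) l) <= length (filter p l) + length (filter q l))%nat.
Proof.
  induction l as [|x l IH]; simpl; [lia|].
  destruct (p x), (q x); simpl; lia.
Qed.

Lemma length_filter_filter {A} (p q : A -> bool) l :
  (length (filter p (filter q l)) <= length (filter p l))%nat.
Proof.
  induction l as [|x l IH]; simpl; [lia|].
  destruct (q x); simpl; destruct (p x); simpl; lia.
Qed.

Lemma length_filter_seq_interval (p : nat -> bool) a b n :
  (forall j, (j < n)%nat -> p j = true <-> (a <= j < b)%nat) ->
  length (filter p (seq 0 n)) = (Nat.min n b - a)%nat.
Proof.
  induction n as [|n IH]; intros Hp; [reflexivity|].
  rewrite seq_S, filter_app, length_app, IH by (intros j Hj; apply Hp; lia).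
  cbn [filter Nat.add]. specialize (Hp n (Nat.lt_succ_diag_r n)).
  destruct (p n); cbn [length].
  - destruct Hp as [Hn _]. specialize (Hn eq_refl). lia.
  - assert (~ (a <= n < b)%nat) by (rewrite <- Hp; discriminate). lia.
Qed.

Lemma list_extremum {A B} (le : B -> B -> Prop) (f : A -> B) l :
  (forall x y, le x y \/ le y x) -> (forall x y z, le x y -> le y z -> le x z) ->
  l <> [] -> exists x, In x l /\ forall y, In y l -> le (f y) (f x).
Proof.
  intros Htot Htrans.
  assert (Hrefl : forall x, le x x) by (intros x; destruct (Htot x x); assumption).
  induction l as [|a l IH]; intros Hl; [congruence|].
  destruct l as [|b l].
  - exists a. split; [left; reflexivity|]. intros y [<-|[]]. apply Hrefl.
  - destruct IH as [x [Hx Hmax]]; [discriminate|].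
    destruct (Htot (f a) (f x)) as [Hax|Hxa].
    + exists x. split; [right; exact Hx|]. intros y [<-|Hy]; auto.
    + exists a. split; [left; reflexivity|]. intros y [<-|Hy]; eauto.
Qed.

(* Peel off the largest element x: all m elements are at most x, so m <= 3x^2 and
   x^(d-1) <= 3 m^(-(1-d)/2), which is at most 6 times m^a - (m-1)^a for a = (1+d)/2. *)
Lemma sumR_share_le_of_sparse d l : 0 < d < 1 ->
  (forall x, In x l -> (1 <= x)%nat /\ (length (filter (fun y => Nat.leb y x) l) <= 3 * x * x)%nat) ->
  sumR (map (share d) l) <= 6 * cost ((1 + d) / 2) (length l).
Proof.
  intros Hd. remember (length l) as m eqn:Hm. revert l Hm.
  induction m as [|m IH]; intros l Hm Hsparse.
  { destruct l; [|discriminate]. unfold cost; simpl; lra. }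
  destruct (list_extremum le (fun x => x) l) as [x [Hx Hmax]];
    [lia | intros; lia | intros ->; discriminate |].
  destruct (in_split x l Hx) as [l1 [l2 ->]].
  rewrite map_app, sumR_app. cbn [map fold_right].
  rewrite length_app in Hm. cbn [length] in Hm.
  assert (Hrest : sumR (map (share d) (l1 ++ l2)) <= 6 * cost ((1 + d) / 2) m).
  { apply IH; [rewrite length_app; lia|].
    intros y Hy. destruct (Hsparse y) as [Hy1 Hy2]; [apply in_app_iff in Hy; apply in_app_iff; simpl; tauto|].
    split; [exact Hy1|]. refine (Nat.le_trans _ _ _ _ Hy2).
    rewrite !filter_app, !length_app. cbn [filter]. destruct (Nat.leb x y); simpl; lia. }
  destruct (Hsparse x Hx) as [Hx1 Hcount].
  rewrite forallb_filter_id, length_app in Hcount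
    by (apply forallb_forall; intros y Hy; apply Nat.leb_le, Hmax, Hy).
  cbn [length] in Hcount.
  pose proof (share_le_of_sq_ge d x (S m) Hd Hx1 ltac:(lia)) as Hshare.
  pose proof (cost_increment_ge ((1 + d) / 2) (S m) ltac:(lra) ltac:(lia)) as Hinc.
  replace (S m - 1)%nat with m in Hinc by lia.
  replace (1 - (1 + d) / 2) with ((1 - d) / 2) in Hinc by field.
  rewrite map_app, sumR_app in Hrest.
  set (P := Rpower (INR (S m)) ((1 - d) / 2)) in *.
  assert (3 / P <= 6 * ((1 + d) / 2 / P)).
  { assert (0 < P) by apply Rpower_pos.
    unfold Rdiv. rewrite <- Rmult_assoc. apply Rmult_le_compat_r; [left; apply Rinv_0_lt_compat|]; lra. }
  lra.
Qed.

Lemma slot_in_horizon n g s j : valid_game n g -> feasible n g s -> (j < n)%nat ->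
  In (s j) (seq 1 (horizon g)).
Proof. intros Hv Hf Hj. apply in_seq. specialize (Hv j Hj). specialize (Hf j Hj). lia. Qed.

Lemma total_cost_eq_sumR_share d n g s : valid_game n g -> feasible n g s ->
  total_cost d n g s = sumR (map (fun j => share d (load n s (s j))) (seq 0 n)).
Proof.
  intros Hv Hf.
  rewrite (sumR_fibers s _ _ (seq 1 (horizon g))).
  - unfold total_cost. f_equal. apply map_ext_in. intros t _.
    rewrite (map_ext_in _ (fun _ => share d (load n s t))).
    + rewrite sumR_const. symmetry. apply INR_mul_share.
    + intros j Hj. apply filter_In in Hj. destruct Hj as [_ Hj].
      now apply Nat.eqb_eq in Hj as ->.
  - apply seq_NoDup.
  - intros j Hj. apply in_seq in Hj. apply (slot_in_horizon n); [..|lia]; assumption.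
Qed.

Lemma load_le n s t : (load n s t <= n)%nat.
Proof. unfold load. rewrite <- (length_seq n 0) at 2. apply filter_length_le. Qed.

Lemma load_pos n s j : (j < n)%nat -> (1 <= load n s (s j))%nat.
Proof.
  intros Hj. unfold load.
  assert (Hin : In j (filter (fun i => Nat.eqb (s i) (s j)) (seq 0 n)))
    by (apply filter_In; split; [apply in_seq; lia | apply Nat.eqb_refl]).
  destruct (filter _ _); [destruct Hin | simpl; lia].
Qed.

Lemma NE_load_gap d n g s j t : d < 1 -> is_NE d n g s -> (j < n)%nat -> t <> s j ->
  (release g j <= t < deadline g j)%nat -> (load n s t + 1 <= load n s (s j))%nat.
Proof.
  intros Hd [_ Hstable] Hj Ht Hint.
  apply (le_of_share_le d); [exact Hd | apply load_pos, Hj | lia |].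
  exact (Hstable j t Hj Ht Hint).
Qed.

(** * Upper bound *)

Section OptimalSlot.
Variables (d : R) (n : nat) (g : game) (s sopt : nat -> nat) (u : nat).
Hypothesis hd : 0 < d < 1.
Hypothesis Hne : is_NE d n g s.
Hypothesis Hopt : feasible n g sopt.

Definition opt_slot_jobs : list nat := filter (fun j => Nat.eqb (sopt j) u) (seq 0 n).

Definition low_load_jobs (b : nat) : list nat :=
  filter (fun j => Nat.leb (load n s (s j)) b) opt_slot_jobs.

Lemma in_low_load_jobs b j :
  In j (low_load_jobs b) <-> (j < n)%nat /\ sopt j = u /\ (load n s (s j) <= b)%nat.
Proof.
  unfold low_load_jobs, opt_slot_jobs. rewrite !filter_In, in_seq, Nat.eqb_eq, Nat.leb_le.
  intuition lia.
Qed.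

Lemma load_between_lt i j : (j < n)%nat -> sopt j = u ->
  (u <= s i < s j \/ s j < s i <= u)%nat -> (load n s (s i) + 1 <= load n s (s j))%nat.
Proof.
  intros Hj Hju Hbetween.
  pose proof (proj1 Hne j Hj). pose proof (Hopt j Hj).
  apply (NE_load_gap d n g s j); [lra | exact Hne | exact Hj | lia | lia].
Qed.

(* Among the jobs of load at most b + 1, only those on the outermost equilibrium
   slots escape [load_between_lt]: any other one lies between u and one of them. *)
Lemma low_load_jobs_step b :
  (length (low_load_jobs (S b)) <= length (low_load_jobs b) + 2 * S b)%nat.
Proof.
  destruct (low_load_jobs (S b)) as [|i0 rest] eqn:Elow; [simpl; lia|].
  rewrite <- Elow. assert (Hne0 : low_load_jobs (S b) <> []) by (rewrite Elow; discriminate).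
  destruct (list_extremum le s _ Nat.le_ge_cases Nat.le_trans Hne0) as [iR [HiR HR]].
  destruct (list_extremum ge s _ (fun x y => Nat.le_ge_cases y x)
              (fun x y z Hxy Hyz => Nat.le_trans _ _ _ Hyz Hxy) Hne0) as [iL [HiL HL]].
  apply in_low_load_jobs in HiR as (HiRn & HiRu & HiRb), HiL as (HiLn & HiLu & HiLb).
  assert (Hslot : forall v,
    (length (filter (fun j => Nat.eqb (s j) v) opt_slot_jobs) <= load n s v)%nat)
    by (intros v; apply length_filter_filter).
  pose proof (Hslot (s iR)). pose proof (Hslot (s iL)).
  assert (Hcover : forall i, In i opt_slot_jobs -> Nat.leb (load n s (s i)) (S b) = true ->
    (Nat.eqb (s i) (s iR) || (Nat.eqb (s i) (s iL) || Nat.leb (load n s (s i)) b))%bool = true).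
  { intros i Hi Hib.
    assert (HiI : In i (low_load_jobs (S b))) by (apply filter_In; split; assumption).
    specialize (HR i HiI). specialize (HL i HiI).
    destruct (Nat.eqb_spec (s i) (s iR)) as [|HneR]; [reflexivity|].
    destruct (Nat.eqb_spec (s i) (s iL)) as [|HneL]; [reflexivity|].
    apply Nat.leb_le.
    destruct (le_lt_dec u (s i)).
    - pose proof (load_between_lt i iR HiRn HiRu ltac:(lia)). lia.
    - pose proof (load_between_lt i iL HiLn HiLu ltac:(lia)). lia. }
  unfold low_load_jobs at 1.
  eapply Nat.le_trans; [apply (length_filter_le_impl _ _ _ Hcover)|].
  eapply Nat.le_trans; [apply length_filter_orb|].
  pose proof (length_filter_orb (fun j => Nat.eqb (s j) (s iL))
                (fun j => Nat.leb (load n s (s j)) b) opt_slot_jobs).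
  unfold low_load_jobs. lia.
Qed.

Lemma low_load_jobs_count b : (length (low_load_jobs b) <= 3 * b * b)%nat.
Proof.
  induction b as [|b IH].
  - apply Nat.le_trans with (length (filter (fun _ => false) opt_slot_jobs));
      [|rewrite filter_false; simpl; lia].
    apply length_filter_le_impl. intros j Hj Hle.
    apply filter_In in Hj as [Hj _]. apply in_seq in Hj.
    pose proof (load_pos n s j ltac:(lia)). apply Nat.leb_le in Hle. lia.
  - pose proof (low_load_jobs_step b). lia.
Qed.

Lemma sumR_share_opt_slot :
  sumR (map (fun j => share d (load n s (s j))) opt_slot_jobs) <= 6 * cost ((1 + d) / 2) (load n sopt u).
Proof.
  rewrite <- (map_map (fun j => load n s (s j)) (share d)).
  replace (load n sopt u) with (length (map (fun j => load n s (s j)) opt_slot_jobs))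
    by (rewrite length_map; reflexivity).
  apply sumR_share_le_of_sparse; [exact hd|].
  intros x Hx. apply in_map_iff in Hx as [j [<- Hj]].
  apply filter_In in Hj as [Hj _]. apply in_seq in Hj.
  split; [apply load_pos; lia|].
  rewrite filter_map_swap, length_map. apply low_load_jobs_count.
Qed.
End OptimalSlot.

Theorem NE_total_cost_le d n g s sopt : 0 < d < 1 -> (1 <= n)%nat ->
  valid_game n g -> is_NE d n g s -> feasible n g sopt ->
  total_cost d n g s <= 6 * Rpower (INR n) ((1 - d) / 2) * total_cost d n g sopt.
Proof.
  intros Hd Hn Hv Hne Hopt.
  rewrite (total_cost_eq_sumR_share d n g s Hv (proj1 Hne)).
  rewrite (sumR_fibers sopt _ _ (seq 1 (horizon g))).
  2: apply seq_NoDup.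
  2: intros j Hj; apply in_seq in Hj; apply (slot_in_horizon n); [..|lia]; assumption.
  unfold total_cost. rewrite <- sumR_scal. apply sumR_le. intros u _.
  eapply Rle_trans; [apply (sumR_share_opt_slot d n g s sopt u Hd Hne Hopt)|].
  rewrite Rmult_assoc. apply Rmult_le_compat_l; [lra|].
  apply cost_sqrt_scaling; [exact Hd | apply load_le].
Qed.

(** * Lower bound *)

Fixpoint tri (k : nat) : nat := match k with 0 => 0 | S k' => tri k' + S k' end%nat.

(* [level j] is the row of j when 0, 1, 2, ... are laid out in rows of lengths
   1, 2, 3, ...; row t starts at [tri (t - 1)]. *)
Fixpoint level (j : nat) : nat :=
  match j with
  | 0 => 1
  | S j' => if Nat.eqb (S j') (tri (level j')) then S (level j') else level j'
  end%nat.

Lemma tri_le_mono a b : (a <= b)%nat -> (tri a <= tri b)%nat.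
Proof. induction 1; simpl; lia. Qed.

Lemma tri_pred t : (1 <= t)%nat -> tri t = (tri (t - 1) + t)%nat.
Proof. destruct t as [|t]; [lia|]. simpl. rewrite Nat.sub_0_r. reflexivity. Qed.

Lemma double_tri k : (2 * tri k = k * S k)%nat.
Proof. induction k; simpl; lia. Qed.

Lemma level_spec j : (1 <= level j)%nat /\ (tri (level j - 1) <= j < tri (level j))%nat.
Proof.
  induction j as [|j IH]; [simpl; lia|].
  cbn [level]. destruct (Nat.eqb_spec (S j) (tri (level j))).
  - replace (S (level j) - 1)%nat with (level j) by lia. simpl tri. lia.
  - lia.
Qed.

Lemma le_level_iff t j : (1 <= t)%nat -> (t <= level j)%nat <-> (tri (t - 1) <= j)%nat.
Proof.
  intros Ht. destruct (level_spec j) as [Hl [Hlo Hhi]]. split; intros H.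
  - pose proof (tri_le_mono (t - 1) (level j - 1) ltac:(lia)). lia.
  - destruct (le_lt_dec t (level j)) as [|Hlt]; [assumption|].
    pose proof (tri_le_mono (level j) (t - 1) ltac:(lia)). lia.
Qed.

Lemma tri_bracket n : (1 <= n)%nat -> exists k, (1 <= k)%nat /\ (tri k <= n < tri (S k))%nat.
Proof.
  intros Hn. exists (level n - 1)%nat.
  destruct (level_spec n) as [Hl [Hlo Hhi]].
  assert (H2 : (2 <= level n)%nat) by (apply le_level_iff; simpl; lia).
  replace (S (level n - 1)) with (level n) by lia. lia.
Qed.

Lemma Rpower_ratio_of_sq_le d x z : 0 < d < 1 -> 0 < x -> 0 < z -> z * z <= 8 * x ->
  / 8 * Rpower x ((1 - d) / 2) * Rpower x d <= x * / Rpower z (1 - d).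
Proof.
  intros Hd Hx Hz Hzx.
  assert (Hpow : Rpower z (1 - d) <= 8 * Rpower x ((1 - d) / 2)).
  { replace (1 - d) with (2 * ((1 - d) / 2)) at 1 by field.
    rewrite <- Rpower_sq by exact Hz. apply Rpower_le_scaled; nra. }
  assert (Hx1 : Rpower x ((1 - d) / 2) * (Rpower x ((1 - d) / 2) * Rpower x d) = x).
  { rewrite <- !Rpower_plus. rewrite <- (Rpower_1 x) at 2 by exact Hx. f_equal. field. }
  pose proof (Rpower_pos z (1 - d)). pose proof (Rpower_pos x ((1 - d) / 2)).
  pose proof (Rpower_pos x d).
  apply Rmult_le_reg_r with (Rpower z (1 - d)); [assumption|].
  replace (x * / Rpower z (1 - d) * Rpower z (1 - d)) with x by (field; lra).
  nra.
Qed.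

Section Staircase.
Variables (n k : nat).
Hypothesis Hk : (1 <= k)%nat.
Hypothesis Hn : (tri k <= n < tri (S k))%nat.

(* Slot t < k holds the t jobs of level t and slot k all the others.  A job may
   move only to an earlier, less loaded slot, so nobody gains by moving. *)
Definition staircase : game := Game (k + 2) (fun _ => 1%nat) (fun j => S (Nat.min (level j) k)).

Definition staircase_NE (j : nat) : nat := Nat.min (level j) k.

Definition first_slot : nat -> nat := fun _ => 1%nat.

Lemma staircase_NE_range j : (1 <= staircase_NE j <= k)%nat.
Proof. unfold staircase_NE. pose proof (level_spec j). lia. Qed.

Lemma load_staircase_NE_below t : (1 <= t < k)%nat -> load n staircase_NE t = t.
Proof.
  intros Ht. unfold load.
  rewrite (length_filter_seq_interval _ (tri (t - 1)) (tri t)).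
  - pose proof (tri_le_mono t k ltac:(lia)).
    pose proof (tri_pred t ltac:(lia)). lia.
  - intros j _. unfold staircase_NE. rewrite Nat.eqb_eq.
    pose proof (le_level_iff t j ltac:(lia)). pose proof (le_level_iff (S t) j ltac:(lia)).
    replace (S t - 1)%nat with t in * by lia. lia.
Qed.

Lemma load_staircase_NE_top : load n staircase_NE k = (n - tri (k - 1))%nat.
Proof.
  unfold load. rewrite (length_filter_seq_interval _ (tri (k - 1)) n), Nat.min_id; [reflexivity|].
  intros j Hj. unfold staircase_NE. rewrite Nat.eqb_eq.
  pose proof (le_level_iff k j Hk). lia.
Qed.

Lemma load_staircase_NE_bounds t : (1 <= t <= k)%nat ->
  (t <= load n staircase_NE t <= 2 * k)%nat.
Proof.
  intros Ht. destruct (Nat.eq_dec t k) as [->|].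
  - rewrite load_staircase_NE_top. pose proof (tri_pred k Hk). simpl tri in Hn. lia.
  - rewrite load_staircase_NE_below; lia.
Qed.

Lemma staircase_valid : valid_game n staircase.
Proof. intros j _. simpl. pose proof (level_spec j). lia. Qed.

Lemma staircase_NE_feasible : feasible n staircase staircase_NE.
Proof. intros j _. pose proof (staircase_NE_range j). unfold staircase_NE in *. simpl. lia. Qed.

Lemma first_slot_feasible : feasible n staircase first_slot.
Proof. intros j _. unfold first_slot. simpl. pose proof (level_spec j). lia. Qed.

Lemma staircase_is_NE d : d < 1 -> is_NE d n staircase staircase_NE.
Proof.
  intros Hd. split; [exact staircase_NE_feasible|].
  intros j t _ Ht Hint. simpl in Hint. fold (staircase_NE j) in Hint.
  pose proof (staircase_NE_range j) as Hs. pose proof (load_staircase_NE_bounds _ Hs).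
  rewrite (load_staircase_NE_below t) by lia.
  apply share_le; lia || lra.
Qed.

Lemma staircase_NE_cost_ge d : d < 1 ->
  INR n * share d (2 * k) <= total_cost d n staircase staircase_NE.
Proof.
  intros Hd.
  rewrite (total_cost_eq_sumR_share d n _ _ staircase_valid staircase_NE_feasible).
  rewrite <- (length_seq n 0) at 1. rewrite <- sumR_const.
  apply sumR_le. intros j _.
  pose proof (staircase_NE_range j) as Hs. pose proof (load_staircase_NE_bounds _ Hs).
  apply share_le; lia || lra.
Qed.

Lemma first_slot_cost d : total_cost d n staircase first_slot = cost d n.
Proof.
  rewrite (total_cost_eq_sumR_share d n _ _ staircase_valid first_slot_feasible).
  assert (Hload : load n first_slot 1 = n).
  { unfold load. rewrite (length_filter_seq_interval _ 0 n), Nat.min_id, Nat.sub_0_r; [reflexivity|].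
    intros j Hj. unfold first_slot. rewrite Nat.eqb_refl. split; [lia|reflexivity]. }
  change (first_slot ?j) with 1%nat. rewrite Hload, sumR_const, length_seq. apply INR_mul_share.
Qed.

Lemma staircase_PoA_ge d : 0 < d < 1 ->
  / 8 * Rpower (INR n) ((1 - d) / 2) * total_cost d n staircase first_slot <=
  total_cost d n staircase staircase_NE.
Proof.
  intros Hd. rewrite first_slot_cost.
  eapply Rle_trans; [|apply staircase_NE_cost_ge; lra].
  assert (Hn1 : (1 <= n)%nat) by (pose proof (tri_le_mono 1 k Hk); simpl in *; lia).
  unfold cost. destruct (Nat.eqb_spec n 0) as [|_]; [lia|]. rewrite share_eq by lia.
  apply Rpower_ratio_of_sq_le; [exact Hd | apply lt_0_INR; lia | apply lt_0_INR; lia |].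
  rewrite <- mult_INR. replace 8 with (INR 8) by (simpl; lra). rewrite <- mult_INR.
  apply le_INR. pose proof (double_tri k). nia.
Qed.
End Staircase.

Theorem theorem1 (d : R) (hd : 0 < d < 1) :
  exists c1 c2 : R, 0 < c1 /\ 0 < c2 /\
  exists N : nat, forall n : nat, (N <= n)%nat ->
    (* upper bound: PoA of every game with n jobs is at most c2 n^((1-d)/2) *)
    (forall (g : game) (s sopt : nat -> nat),
        valid_game n g -> is_NE d n g s -> feasible n g sopt ->
        total_cost d n g s <= c2 * Rpower (INR n) ((1 - d) / 2) * total_cost d n g sopt) /\
    (* lower bound: some game with n jobs has PoA at least c1 n^((1-d)/2) *)
    (exists (g : game) (s sopt : nat -> nat),
        valid_game n g /\ is_NE d n g s /\ feasible n g sopt /\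
        c1 * Rpower (INR n) ((1 - d) / 2) * total_cost d n g sopt <= total_cost d n g s).
Proof.
  exists (/ 8), 6. split; [lra|]. split; [lra|].
  exists 1%nat. intros n Hn. split.
  - intros g s sopt. apply NE_total_cost_le; assumption.
  - destruct (tri_bracket n Hn) as [k [Hk Hkn]].
    exists (staircase k), (staircase_NE k), first_slot.
    split; [exact (staircase_valid n k Hk Hkn)|].
    split; [exact (staircase_is_NE n k Hk Hkn d (proj2 hd))|].
    split; [exact (first_slot_feasible n k Hk Hkn)|].
    exact (staircase_PoA_ge n k Hk Hkn d hd).
Qed.
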